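(* Consider the mergesort that recursively splits the input sequence into two contiguous parts, sorts each, and merges them with the following merge algorithm: set $T=\emptyset$; repeat: if $T_1$ is empty return $\mathrm{join}(T,T_2)$; else if $T_2$ is empty return $\mathrm{join}(T,T_1)$; else with $k_1=\min(T_1)$, $k_2=\min(T_2)$, if $k_1>k_2$ let $(t,T_2)=\mathrm{split}(T_2,k_1)$, else let $(t,T_1)=\mathrm{split}(T_1,k_2)$, and set $T=\mathrm{join}(T,t)$. Then this mergesort sorts a sequence $\pi$ in time $O(\mathrm{LIB}(\pi))$.
   Context: Trees are heterogeneous finger search trees: $\mathrm{split}(T,k)$ returns the trees of keys of $T$ less than and greater than $k$; $\mathrm{join}$ of two trees whose key ranges do not interleave returns a BST on their union; both run in amortized time $O(\lg(\min(|T_1|,|T_2|)+1))$ where $T_1,T_2$ are the two smaller trees. Keys are distinct. $\mathrm{LIB}(\pi)$ is computed with respect to the static binary tree $P$ given by the recursion of the mergesort, whose leaves are the keys of $\pi$ in the order of $\pi$: for each internal vertex $v$, list the leaves below $v$ in sorted key order, labeling each L or R by the subtree of $v$ containing it; with $S(v)$ the decomposition into the minimum number of runs of equal labels, $\mathrm{LIB}(v)=\sum_{r\in S(v)}\lg(|r|+1)$ and $\mathrm{LIB}(\pi)=\sum_v\mathrm{LIB}(v)$. *)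

From Stdlib Require Import Reals.
From mathcomp Require Import all_boot.

Set Implicit Arguments. Unset Strict Implicit. Unset Printing Implicit Defensive.

Definition lg (x : R) : R := Rdiv (ln x) (ln 2).

(* Trees are modelled by their (sorted) sequence of keys; the algorithm's
   behaviour only depends on the key sets.  split and join on key sets: *)
Definition tsplit (T : seq nat) (k : nat) : seq nat * seq nat :=
  ([seq x <- T | x < k], [seq x <- T | k < x]).
(* join of trees with non-interleaving key ranges, first one smaller *)
Definition tjoin (T1 T2 : seq nat) : seq nat := T1 ++ T2.

(* Cost charged to one split/join whose two smaller trees have sizes a, b:
   its amortized bound O(lg(min(a,b)+1)), plus a constant 1. *)
Definition opcost (a b : nat) : R := Rplus R1 (lg (Rplus (INR (minn a b)) 1)).

(* The merge loop; state (T, T1, T2); returns (result, total cost).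
   Each loop iteration costs 1 in addition to its split/join costs. *)
Fixpoint merge_aux (fuel : nat) (T T1 T2 : seq nat) : seq nat * R :=
  match fuel with
  | 0 => (T ++ T1 ++ T2, R0)
  | f.+1 =>
    match T1, T2 with
    | [::], _ => (tjoin T T2, Rplus R1 (opcost (size T) (size T2)))
    | _, [::] => (tjoin T T1, Rplus R1 (opcost (size T) (size T1)))
    | k1 :: _, k2 :: _ =>
      if k2 < k1 then
        let: (t, T2') := tsplit T2 k1 in
        let: (res, c) := merge_aux f (tjoin T t) T1 T2' in
        (res, Rplus (Rplus (Rplus R1 (opcost (size t) (size T2'))) (opcost (size T) (size t))) c)
      else
        let: (t, T1') := tsplit T1 k2 in
        let: (res, c) := merge_aux f (tjoin T t) T1' T2 in
        (res, Rplus (Rplus (Rplus R1 (opcost (size t) (size T1'))) (opcost (size T) (size t))) c)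
    end
  end.

Definition merge_trees (T1 T2 : seq nat) : seq nat * R :=
  merge_aux (size T1 + size T2).+1 [::] T1 T2.

(* Mergesort splitting a sequence of length n >= 2 into its first [half n]
   elements and the rest.  Returns (sorted output, total cost); each
   recursive call costs 1 in addition to the merge cost. *)
Fixpoint msort_aux (fuel : nat) (half : nat -> nat) (s : seq nat) : seq nat * R :=
  match fuel with
  | 0 => (s, R1)
  | f.+1 =>
    if size s <= 1 then (s, R1) else
    let: (sl, cl) := msort_aux f half (take (half (size s)) s) in
    let: (sr, cr) := msort_aux f half (drop (half (size s)) s) in
    let: (m, cm) := merge_trees sl sr in
    (m, Rplus (Rplus (Rplus R1 cl) cr) cm)
  end.

Definition mergesort (half : nat -> nat) (s : seq nat) : seq nat * R :=
  msort_aux (size s) half s.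

Fixpoint runs_aux (b : bool) (n : nat) (s : seq bool) : seq nat :=
  match s with
  | [::] => [:: n]
  | c :: s' => if c == b then runs_aux b n.+1 s' else n :: runs_aux c 1 s'
  end.
Definition runs (s : seq bool) : seq nat :=
  if s is b :: s' then runs_aux b 1 s' else [::].

(* LIB of an internal vertex whose left subtree has leaves l and right subtree
   leaves r: list leaves in sorted key order, label L (true) / R (false). *)
Definition LIB_vertex (l r : seq nat) : R :=
  foldr (fun n acc => Rplus (lg (Rplus (INR n) R1)) acc) R0
    (runs [seq x \in l | x <- sort leq (l ++ r)]).

Fixpoint LIB_aux (fuel : nat) (half : nat -> nat) (s : seq nat) : R :=
  match fuel with
  | 0 => R0
  | f.+1 =>
    if size s <= 1 then R0 else
    Rplus (Rplus (LIB_vertex (take (half (size s)) s) (drop (half (size s)) s))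
                 (LIB_aux f half (take (half (size s)) s)))
          (LIB_aux f half (drop (half (size s)) s))
  end.

Definition LIB (half : nat -> nat) (s : seq nat) : R := LIB_aux (size s) half s.

(* Each pass of the merge loop moves into T the keys of one input tree that lie
   below the minimum of the other; in the sorted label sequence of the vertex
   these keys form exactly one maximal run r.  The split and the join of the pass
   each involve a tree of size |r|, so the pass costs at most
   3 + 2 lg(|r|+1) <= 5 lg(|r|+1), and merging at a vertex v costs at most
   5 LIB(v).  Over the recursion tree, the unit cost of each call is absorbed by
   LIB(v) >= 1 at the internal vertex making it, giving 7 LIB(pi) + 1, which is
   at most 8 LIB(pi) as soon as pi has two keys. *)

From Stdlib Require Import Reals Lra Lia.
From mathcomp Require Import all_boot zify.

Set Implicit Arguments.
Unset Strict Implicit.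
Unset Printing Implicit Defensive.

Definition lg1p (n : nat) : R := lg (INR n + R1).

Local Open Scope R_scope.

Lemma ln2_gt0 : 0 < ln 2.
Proof. have := ln_lt_2; lra. Qed.

Lemma lg_le x y : 0 < x -> x <= y -> lg x <= lg y.
Proof.
move=> x_gt0 /Rle_lt_or_eq_dec[xy|<-]; last exact: Rle_refl.
apply: Rmult_le_compat_r; first exact/Rlt_le/Rinv_0_lt_compat/ln2_gt0.
exact/Rlt_le/ln_increasing.
Qed.

Lemma lg1p_le m n : (m <= n)%N -> lg1p m <= lg1p n.
Proof. by move=> /leP/le_INR mn; apply: lg_le; have := pos_INR m; lra. Qed.

Lemma lg1p_ge0 n : 0 <= lg1p n.
Proof.
have <- : lg 1 = 0 by rewrite /lg ln_1 /Rdiv Rmult_0_l.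
by apply: lg_le; have := pos_INR n; lra.
Qed.

Lemma lg1p_ge1 n : (0 < n)%N -> 1 <= lg1p n.
Proof.
move=> /leP/le_INR n_ge1.
have <- : lg 2 = 1 by rewrite /lg /Rdiv Rinv_r //; have := ln2_gt0; lra.
by apply: lg_le; rewrite /= in n_ge1; lra.
Qed.

Lemma opcost_le a b c : (minn a b <= c)%N -> opcost a b <= 1 + lg1p c.
Proof.
move/lg1p_le; rewrite /opcost.
(* [opcost] is written with the numeral [1], [lg1p] with [R1]: convertible, but
   distinct atoms for [lra]. *)
by change (lg (INR (minn a b) + 1)) with (lg1p (minn a b)); lra.
Qed.

Local Close Scope R_scope.

Lemma map_const_in (T U : eqType) (f : T -> U) (c : U) (s : seq T) :
  {in s, forall x, f x = c} -> map f s = nseq (size s) c.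
Proof.
move=> f_c; rewrite -(size_map f); apply/all_pred1P/allP => _ /mapP[x x_s ->].
by rewrite /= f_c.
Qed.

Lemma sort_catC (s1 s2 : seq nat) : sort leq (s1 ++ s2) = sort leq (s2 ++ s1).
Proof. by apply/(perm_sortP leq_total leq_trans anti_leq); rewrite perm_catC. Qed.

Lemma sort_cat_sort (l r : seq nat) :
  sort leq (sort leq l ++ sort leq r) = sort leq (l ++ r).
Proof.
by apply/(perm_sortP leq_total leq_trans anti_leq); apply: perm_cat; rewrite perm_sort.
Qed.

Lemma ltn_sorted_sort (s : seq nat) : sorted ltn s -> sort leq s = s.
Proof. by rewrite ltn_sorted_uniq_leq => /andP[_ /(sorted_sort leq_trans)]. Qed.

Lemma sort_ltn_sorted (s : seq nat) : uniq s -> sorted ltn (sort leq s).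
Proof. by rewrite ltn_sorted_uniq_leq sort_uniq (sort_sorted leq_total) andbT. Qed.

Lemma sorted_ltn_head_le (a : nat) (l : seq nat) :
  sorted ltn (a :: l) -> all (leq a) (a :: l).
Proof.
move=> /(order_path_min ltn_trans) l_gt_a; rewrite /= leqnn.
by apply/allP => x /(allP l_gt_a)/ltnW.
Qed.

Lemma sort_cat_allrel (s1 s2 : seq nat) : sorted leq s1 -> allrel leq s1 s2 ->
  sort leq (s1 ++ s2) = s1 ++ sort leq s2.
Proof.
move=> s1_sorted; rewrite allrelC => s21.
apply: (sorted_eq leq_trans anti_leq); first exact: sort_sorted leq_total _.
  rewrite sorted_pairwise ?pairwise_cat; last exact: leq_trans.
  rewrite -!sorted_pairwise ?s1_sorted ?(sort_sorted leq_total) ?andbT; [|exact: leq_trans..].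
  by rewrite allrelC /allrel (perm_all _ (permEl (perm_sort leq s2))).
by rewrite perm_sort perm_cat2l perm_sym perm_sort.
Qed.

Lemma sort_cat_peel (l r : seq nat) (b : nat) :
  sorted ltn l -> b \notin l -> all (leq b) r ->
  sort leq (l ++ r) = [seq x <- l | x < b] ++ sort leq ([seq x <- l | b < x] ++ r).
Proof.
move=> l_sorted b_notin_l r_ge_b.
have filter_gt_b : [seq x <- l | b < x] = [seq x <- l | ~~ (x < b)].
  apply: eq_in_filter => x x_in_l; rewrite -leqNgt ltn_neqAle.
  by case: eqP => // b_eq_x; rewrite b_eq_x x_in_l in b_notin_l.
have l_perm : perm_eq l ([seq x <- l | x < b] ++ [seq x <- l | b < x]).
  by rewrite filter_gt_b perm_sym perm_filterC.
rewrite -sort_cat_allrel.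
- by apply/(perm_sortP leq_total leq_trans anti_leq); rewrite catA perm_cat2r.
- by apply: sorted_filter; [exact: leq_trans | exact: sub_sorted ltnW _ l_sorted].
apply/allrelP => x y; rewrite mem_filter mem_cat mem_filter => /andP[x_lt_b _].
case/orP => [/andP[b_lt_y _] | /(allP r_ge_b) b_le_y]; apply: ltnW.
  exact: ltn_trans x_lt_b b_lt_y.
exact: leq_trans x_lt_b b_le_y.
Qed.

Lemma runs_aux_nseq b n k s : runs_aux b n (nseq k b ++ s) = runs_aux b (n + k) s.
Proof. by elim: k n => [|k IH] n /=; rewrite ?addn0 // eqxx IH addnS. Qed.

Lemma runs_nseq m b : 0 < m -> runs (nseq m b) = [:: m].
Proof. by case: m => // m _; rewrite /= -[nseq m b]cats0 runs_aux_nseq add1n. Qed.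

Lemma runs_nseq_cat m b c s : 0 < m -> c != b ->
  runs (nseq m b ++ c :: s) = m :: runs (c :: s).
Proof.
by case: m => // m _ c_neq_b; rewrite /= runs_aux_nseq /= (negbTE c_neq_b) add1n.
Qed.

Lemma runs_map_negb s : runs (map negb s) = runs s.
Proof.
case: s => //= b s; elim: s b 1 => //= c s IH b n.
by rewrite (inj_eq negb_inj); case: eqP; rewrite IH.
Qed.

Lemma runs_aux_head b n s : n <= head 0 (runs_aux b n s).
Proof.
elim: s b n => //= c s IH b n; case: eqP => //= _.
exact: leq_trans (leqnSn n) (IH b n.+1).
Qed.

Definition run_cost (s : seq nat) : R := foldr (fun n acc => Rplus (lg1p n) acc) R0 s.

Definition vertex_labels (l r : seq nat) : seq bool :=
  [seq x \in l | x <- sort leq (l ++ r)].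

Lemma LIB_vertexE (l r : seq nat) :
  LIB_vertex l r = run_cost (runs (vertex_labels l r)).
Proof. by []. Qed.

Lemma run_cost_ge0 s : Rle 0 (run_cost s).
Proof. elim: s => [|n s IH] /=; [exact: Rle_refl | have := lg1p_ge0 n; lra]. Qed.

Lemma LIB_vertex_ge0 (l r : seq nat) : Rle 0 (LIB_vertex l r).
Proof. exact: run_cost_ge0. Qed.

Lemma LIB_vertex_ge1 (l r : seq nat) :
  0 < size l + size r -> Rle 1 (LIB_vertex l r).
Proof.
rewrite LIB_vertexE /vertex_labels -size_cat -(size_sort leq).
case: (sort leq (l ++ r)) => //= x s _.
have := runs_aux_head (x \in l) 1 [seq y \in l | y <- s].
case: runs_aux => //= m rest /lg1p_ge1; have := run_cost_ge0 rest; lra.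
Qed.

Lemma vertex_labels_nil_l (r : seq nat) : vertex_labels [::] r = nseq (size r) false.
Proof. by rewrite /vertex_labels (map_const_in (c := false)) ?size_sort. Qed.

Lemma vertex_labels_nil_r (l : seq nat) : vertex_labels l [::] = nseq (size l) true.
Proof.
rewrite /vertex_labels cats0 (map_const_in (c := true)) ?size_sort // => x.
by rewrite mem_sort.
Qed.

Lemma LIB_vertex_nil_l (r : seq nat) : 0 < size r -> LIB_vertex [::] r = lg1p (size r).
Proof. by move=> r_gt0; rewrite LIB_vertexE vertex_labels_nil_l runs_nseq //= Rplus_0_r. Qed.

Lemma LIB_vertex_nil_r (l : seq nat) : 0 < size l -> LIB_vertex l [::] = lg1p (size l).
Proof. by move=> l_gt0; rewrite LIB_vertexE vertex_labels_nil_r runs_nseq //= Rplus_0_r. Qed.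

Lemma vertex_labelsC (l r : seq nat) :
  uniq (l ++ r) -> vertex_labels r l = map negb (vertex_labels l r).
Proof.
rewrite cat_uniq => /and3P[_ /hasPn r_notin_l _].
rewrite /vertex_labels sort_catC -map_comp; apply/eq_in_map => x /=.
rewrite mem_sort mem_cat; case: (boolP (x \in l)) => //= x_in_l _.
exact: contraTF (r_notin_l x) x_in_l.
Qed.

Lemma LIB_vertexC (l r : seq nat) : uniq (l ++ r) -> LIB_vertex r l = LIB_vertex l r.
Proof. by move=> lr_uniq; rewrite !LIB_vertexE vertex_labelsC // runs_map_negb. Qed.

Lemma LIB_vertex_sort (l r : seq nat) :
  LIB_vertex (sort leq l) (sort leq r) = LIB_vertex l r.
Proof.
rewrite !LIB_vertexE /vertex_labels sort_cat_sort.
by congr (run_cost (runs _)); apply: eq_map => x; rewrite mem_sort.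
Qed.

Lemma LIB_vertex_peel_l (l r : seq nat) (b : nat) :
  sorted ltn l -> sorted ltn (b :: r) -> b \notin l -> has (fun x => x < b) l ->
  LIB_vertex l (b :: r) =
    Rplus (lg1p (size [seq x <- l | x < b])) (LIB_vertex [seq x <- l | b < x] (b :: r)).
Proof.
move=> l_sorted /(order_path_min ltn_trans) r_gt_b b_notin_l has_lt_b.
set t := [seq x <- l | x < b]; set u := [seq x <- l | b < x].
have ur_gt_b : all (fun x => b < x) (u ++ r).
  by rewrite all_cat r_gt_b andbT; apply/allP => x; rewrite mem_filter => /andP[].
have sort_u : sort leq (u ++ b :: r) = b :: sort leq (u ++ r).
  rewrite -[b :: sort _ _]/([:: b] ++ _) -sort_cat_allrel ?allrel1l //.
    apply/(perm_sortP leq_total leq_trans anti_leq).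
    exact: permEl (perm_catCA u [:: b] r).
  by apply/allP => x /(allP ur_gt_b)/ltnW.
have t_in_l : {in t, forall x, (x \in l) = true} by move=> x; rewrite mem_filter => /andP[].
have t_gt0 : 0 < size t by rewrite size_filter -has_count.
have b_notin_u : b \notin u by rewrite mem_filter ltnn.
rewrite !LIB_vertexE /vertex_labels (sort_cat_peel l_sorted b_notin_l); last first.
  by rewrite /= leqnn; apply/allP => x /(allP r_gt_b)/ltnW.
rewrite sort_u map_cat (map_const_in t_in_l) /= (negbTE b_notin_l) (negbTE b_notin_u).
rewrite runs_nseq_cat //=; congr (Rplus _ (run_cost (runs (false :: _)))).
apply/eq_in_map => x; rewrite mem_sort => /(allP ur_gt_b) b_lt_x.
by rewrite mem_filter b_lt_x.
Qed.

Lemma peel_run_l (a b : nat) (l r : seq nat) :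
  sorted ltn (a :: l) -> sorted ltn (b :: r) -> uniq ((a :: l) ++ b :: r) -> a < b ->
  let t := [seq x <- a :: l | x < b] in let l' := [seq x <- a :: l | b < x] in
  [/\ 0 < size t, size l' <= size l, uniq (l' ++ b :: r),
      sort leq ((a :: l) ++ b :: r) = t ++ sort leq (l' ++ b :: r)
    & LIB_vertex (a :: l) (b :: r) = Rplus (lg1p (size t)) (LIB_vertex l' (b :: r))].
Proof.
move=> al_sorted br_sorted lr_uniq a_lt_b t l'.
have b_notin_al : b \notin a :: l.
  by move: lr_uniq; rewrite cat_uniq => /and3P[_ /hasPn-> //]; exact: mem_head.
split.
- by rewrite /t /= a_lt_b.
- by rewrite /l' /= ltnNge (ltnW a_lt_b) size_filter count_size.
- exact: subseq_uniq (cat_subseq (filter_subseq _ _) (subseq_refl _)) lr_uniq.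
- exact: sort_cat_peel al_sorted b_notin_al (sorted_ltn_head_le br_sorted).
by apply: LIB_vertex_peel_l; rewrite //= a_lt_b.
Qed.

Lemma peel_run_r (a b : nat) (l r : seq nat) :
  sorted ltn (a :: l) -> sorted ltn (b :: r) -> uniq ((a :: l) ++ b :: r) -> b < a ->
  let t := [seq x <- b :: r | x < a] in let r' := [seq x <- b :: r | a < x] in
  [/\ 0 < size t, size r' <= size r, uniq ((a :: l) ++ r'),
      sort leq ((a :: l) ++ b :: r) = t ++ sort leq ((a :: l) ++ r')
    & LIB_vertex (a :: l) (b :: r) = Rplus (lg1p (size t)) (LIB_vertex (a :: l) r')].
Proof.
move=> al_sorted br_sorted lr_uniq b_lt_a t r'.
have rl_uniq : uniq ((b :: r) ++ a :: l) by rewrite uniq_catC.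
have [t_gt0 r'_le r'l_uniq sort_eq LIB_eq] :=
  peel_run_l br_sorted al_sorted rl_uniq b_lt_a.
have lr'_uniq : uniq ((a :: l) ++ r') by rewrite uniq_catC.
split => //; first by rewrite sort_catC sort_eq sort_catC.
by rewrite -LIB_vertexC // LIB_eq LIB_vertexC.
Qed.

Lemma merge_last_cost a n : 0 < n -> Rle (R1 + opcost a n) (5 * lg1p n).
Proof.
move=> n_gt0; have := opcost_le (geq_minr a n); have := lg1p_ge1 n_gt0; lra.
Qed.

Lemma merge_step_cost n a b c V : 0 < n -> Rle c (5 * V) ->
  Rle (R1 + opcost n a + opcost b n + c) (5 * (lg1p n + V)).
Proof.
move=> n_gt0; have := opcost_le (geq_minl n a); have := opcost_le (geq_minr b n).
have := lg1p_ge1 n_gt0; lra.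
Qed.

Lemma merge_aux_correct f (T l r : seq nat) :
  sorted ltn l -> sorted ltn r -> uniq (l ++ r) ->
  0 < size l + size r -> size l + size r < f ->
  (merge_aux f T l r).1 = T ++ sort leq (l ++ r) /\
  Rle (merge_aux f T l r).2 (5 * LIB_vertex l r).
Proof.
elim: f T l r => // f IH T [|a l] [|b r] // l_sorted r_sorted lr_uniq _ lr_lt_f.
- rewrite /= ltn_sorted_sort ?LIB_vertex_nil_l //.
  by split => //; exact: merge_last_cost.
- rewrite /= cats0 ltn_sorted_sort ?LIB_vertex_nil_r //.
  by split => //; exact: merge_last_cost.
cbn [merge_aux]; rewrite /tsplit /tjoin; cbv beta iota.
case: (ltngtP a b) => [a_lt_b | b_lt_a | a_eq_b].
- have [t_gt0 l'_le l'r_uniq sort_eq LIB_eq] := peel_run_l l_sorted r_sorted lr_uniq a_lt_b.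
  have l'_sorted := sorted_filter ltn_trans (fun x => b < x) l_sorted.
  have [] := IH (T ++ [seq x <- a :: l | x < b]) _ _ l'_sorted r_sorted l'r_uniq.
  + by rewrite addnS.
  + by move: lr_lt_f l'_le => /=; lia.
  case: (merge_aux _ _ _ _) => res c /= -> c_le; split; first by rewrite -catA sort_eq.
  by rewrite LIB_eq; exact: merge_step_cost.
- have [t_gt0 r'_le lr'_uniq sort_eq LIB_eq] := peel_run_r l_sorted r_sorted lr_uniq b_lt_a.
  have r'_sorted := sorted_filter ltn_trans (fun x => a < x) r_sorted.
  have [] := IH (T ++ [seq x <- b :: r | x < a]) _ _ l_sorted r'_sorted lr'_uniq isT.
  + by move: lr_lt_f r'_le => /=; lia.
  case: (merge_aux _ _ _ _) => res c /= -> c_le; split; first by rewrite -catA sort_eq.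
  by rewrite LIB_eq; exact: merge_step_cost.
by move: lr_uniq; rewrite a_eq_b cat_uniq /= mem_head andbF.
Qed.

Lemma merge_trees_correct (l r : seq nat) :
  sorted ltn l -> sorted ltn r -> uniq (l ++ r) -> 0 < size l + size r ->
  (merge_trees l r).1 = sort leq (l ++ r) /\
  Rle (merge_trees l r).2 (5 * LIB_vertex l r).
Proof. by move=> *; exact: merge_aux_correct. Qed.



Section Mergesort.

Variable half : nat -> nat.

Lemma LIB_aux_ge0 f (s : seq nat) : Rle 0 (LIB_aux f half s).
Proof.
elim: f s => [|f IH] s /=; first exact: Rle_refl.
case: ifP => _; first exact: Rle_refl.
set l := take _ s; set r := drop _ s.
by have := LIB_vertex_ge0 l r; have := IH l; have := IH r; lra.
Qed.

Lemma LIB_aux_ge1 f (s : seq nat) :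
  2 <= size s -> 0 < f -> Rle 1 (LIB_aux f half s).
Proof.
case: f => // f s_ge2 _; rewrite /= leqNgt s_ge2 /=.
set l := take _ s; set r := drop _ s.
have lr_gt0 : 0 < size l + size r by rewrite -size_cat cat_take_drop ltnW.
have := LIB_vertex_ge1 lr_gt0; have := LIB_aux_ge0 f l; have := LIB_aux_ge0 f r.
lra.
Qed.

Hypothesis half_bounds : forall n, 2 <= n -> 0 < half n < n.

Lemma msort_aux_correct f (s : seq nat) : uniq s -> size s <= f ->
  (msort_aux f half s).1 = sort leq s /\
  Rle (msort_aux f half s).2 (7 * LIB_aux f half s + 1).
Proof.
elim: f s => [|f IH] s s_uniq s_le_f.
  by case: s s_le_f s_uniq => //= _ _; split => //; lra.
cbn [msort_aux LIB_aux]; case: leqP => [s_le1 | s_gt1].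
  by split; [case: s s_le1 {s_uniq s_le_f} => [|x []] | rewrite /=; lra].
set l := take _ s; set r := drop _ s.
have /andP[half_gt0 half_lt] := half_bounds s_gt1.
have lr_uniq : uniq (l ++ r) by rewrite cat_take_drop.
have [l_uniq r_uniq] : uniq l /\ uniq r.
  by move: lr_uniq; rewrite cat_uniq => /and3P[-> _ ->].
have size_l : size l = half (size s) by rewrite size_takel // ltnW.
have size_r : size r = size s - half (size s) by rewrite size_drop.
have lr_gt0 : 0 < size l + size r by rewrite size_l addn_gt0 half_gt0.
have l_le_f : size l <= f by rewrite size_l; lia.
have r_le_f : size r <= f by rewrite size_r; lia.
have [l_sort l_cost] := IH l l_uniq l_le_f.
have [r_sort r_cost] := IH r r_uniq r_le_f.
case: (msort_aux f half l) l_sort l_cost => sl cl /= -> l_cost.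
case: (msort_aux f half r) r_sort r_cost => sr cr /= -> r_cost.
have [] := merge_trees_correct (sort_ltn_sorted l_uniq) (sort_ltn_sorted r_uniq).
- by rewrite (perm_uniq (perm_cat (permEl (perm_sort _ l)) (permEl (perm_sort _ r)))).
- by rewrite !size_sort.
case: (merge_trees _ _) => m cm /= ->; rewrite LIB_vertex_sort sort_cat_sort cat_take_drop.
by have := LIB_vertex_ge1 lr_gt0; split => //; lra.
Qed.

End Mergesort.

Theorem lemma7 :
  exists C : R,
  forall half : nat -> nat,
  (forall n : nat, 2 <= n -> 0 < half n < n) ->
  forall pi : seq nat, uniq pi ->
    (mergesort half pi).1 = sort leq pi /\
    (2 <= size pi -> Rle (mergesort half pi).2 (Rmult C (LIB half pi))).
Proof.
exists (8 : R) => half half_bounds pi pi_uniq.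
have [sorted_pi cost_pi] := msort_aux_correct half_bounds pi_uniq (leqnn (size pi)).
split => // pi_ge2; have := LIB_aux_ge1 half pi_ge2 (ltnW pi_ge2).
by rewrite /mergesort /LIB; lra.
Qed.
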